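(* Let $S$ be a nonempty compact convex set in the plane and fix $0<\alpha<\pi$. Then there exist a point $O$ in the plane and two rays $q$ and $r$ emanating from $O$ and forming an angle $\alpha$, such that $S$ is contained in the closed convex wedge bounded by $q$ and $r$, the ray $q$ meets $S$ in exactly one point $X$, the ray $r$ meets $S$ in exactly one point $Y$, and $|OX|=|OY|$. *)

From Stdlib Require Import Reals.
Open Scope R_scope.

Definition pt := (R * R)%type.

Definition padd (p q : pt) : pt := (fst p + fst q, snd p + snd q).
Definition pscale (a : R) (p : pt) : pt := (a * fst p, a * snd p).
Definition dot (p q : pt) : R := fst p * fst q + snd p * snd q.
Definition pdist (p q : pt) : R := sqrt ((fst p - fst q) ^ 2 + (snd p - snd q) ^ 2).
Definition unit_vec (u : pt) : Prop := dot u u = 1.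

(* Compactness in R^2 = closed and bounded (Heine–Borel). *)
Definition bounded (S : pt -> Prop) : Prop :=
  exists M : R, forall p, S p -> pdist p (0, 0) <= M.
Definition closed (S : pt -> Prop) : Prop :=
  forall p, (forall eps, eps > 0 -> exists q, S q /\ pdist p q < eps) -> S p.
Definition compact2 (S : pt -> Prop) : Prop := closed S /\ bounded S.

Definition convex (S : pt -> Prop) : Prop :=
  forall p q (t : R), S p -> S q -> 0 <= t <= 1 ->
    S (padd (pscale (1 - t) p) (pscale t q)).

Definition ray (O u : pt) (p : pt) : Prop :=
  exists s, 0 <= s /\ p = padd O (pscale s u).

Definition wedge (O u v : pt) (p : pt) : Prop :=
  exists s t, 0 <= s /\ 0 <= t /\ p = padd O (padd (pscale s u) (pscale t v)).

(* Let [h] be the support function of [S], [h(t) = min_{p in S} <(cos t, sin t), p>], and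
   [beta = alpha - PI].  For every [t] the support lines with inner normals at the angles [t]
   and [t + beta] bound a wedge of opening [alpha] that contains [S].  Wherever [h] is
   differentiable, the difference of the distances from the apex of this wedge to the contact
   points on its two sides is, up to the factor [sin alpha], the derivative of the
   [2 PI]-periodic function
     [Phi(t) = (1 - cos alpha) * int_{t+beta}^{t} h - sin alpha * (h(t) + h(t + beta))].
   At a maximum of [Phi], comparing [Phi] with the differentiable function obtained by freezing
   the contact points shows that any contact point on one side is as far from the apex as any
   contact point on the other.  Hence each side touches [S] in exactly one point, and these two
   points are equidistant from the apex. *)

From Pilot Require Import Defs.
From Stdlib Require Import Reals Lra Nsatz Classical IndefiniteDescription.
From Coquelicot Require Import Coquelicot.
Open Scope R_scope.

Definition perp (n : pt) : pt := (- snd n, fst n).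

Definition dir (y : R) : pt := (cos y, sin y).

Lemma sin2_cos2_pow x : sin x ^ 2 + cos x ^ 2 = 1.
Proof. rewrite <- (sin2_cos2 x). unfold Rsqr. ring. Qed.

Lemma unit_vec_dir y : unit_vec (dir y).
Proof. unfold unit_vec, dot, dir; simpl. rewrite <- (sin2_cos2_pow y). ring. Qed.

Lemma dir_add_2PI y : dir (y + 2 * PI) = dir y.
Proof. unfold dir. rewrite cos_plus, sin_plus, cos_2PI, sin_2PI. f_equal; ring. Qed.

Lemma dir_add_sub_PI c a :
  dir (c + (a - PI)) = (- cos a * cos c + sin a * sin c, - cos a * sin c - sin a * cos c).
Proof.
  unfold dir. rewrite cos_plus, sin_plus, cos_minus, sin_minus, cos_PI, sin_PI. f_equal; ring.
Qed.

Lemma unit_vec_perp n : unit_vec n -> unit_vec (perp n).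
Proof. unfold unit_vec, dot, perp; simpl; lra. Qed.

Lemma Rabs_dot_unit_le u q : unit_vec u -> Rabs (dot u q) <= pdist q (0, 0).
Proof.
  unfold unit_vec, dot, pdist; simpl; intros Hu.
  rewrite <- sqrt_Rsqr_abs; apply sqrt_le_1_alt.
  replace (fst q - 0) with (fst q) by ring; replace (snd q - 0) with (snd q) by ring.
  pose proof (pow2_ge_0 (fst u * snd q - snd u * fst q)); unfold Rsqr; nra.
Qed.

Lemma pdist_frame n m k q : unit_vec n ->
  pdist (padd (pscale m n) (pscale k (perp n))) q
  = sqrt ((m - dot n q) ^ 2 + (k - dot (perp n) q) ^ 2).
Proof.
  unfold unit_vec, pdist, padd, pscale, dot, perp; simpl; intros Hn.
  f_equal; apply Rminus_diag_uniq.
  transitivity ((fst n * fst n + snd n * snd n - 1)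
                * (m ^ 2 + k ^ 2 - fst q ^ 2 - snd q ^ 2)); [ring|].
  rewrite Hn; ring.
Qed.

Lemma pdist_padd_pscale P u s : unit_vec u -> 0 <= s -> pdist P (padd P (pscale s u)) = s.
Proof.
  unfold unit_vec, dot, pdist, padd, pscale; cbn [fst snd]; intros Hu Hs.
  replace ((fst P - (fst P + s * fst u)) ^ 2 + (snd P - (snd P + s * snd u)) ^ 2) with (s ^ 2)
    by (transitivity (s ^ 2 * (fst u * fst u + snd u * snd u)); [rewrite Hu | ]; ring).
  apply sqrt_pow2, Hs.
Qed.

Lemma lub_approx E m eta : is_lub E m -> 0 < eta -> exists x, E x /\ m - eta < x.
Proof.
  intros [_ Hleast] Heta. apply NNPP; intros Hnone.
  enough (m <= m - eta) by lra.
  apply Hleast; intros x Hx. apply Rnot_lt_le; intros Hlt. apply Hnone; eauto.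
Qed.

Lemma closed_frame_point S n m k : Defs.closed S -> unit_vec n ->
  (forall e, 0 < e -> exists q, S q /\ Rabs (dot n q - m) < e /\ Rabs (dot (perp n) q - k) < e) ->
  S (padd (pscale m n) (pscale k (perp n))).
Proof.
  intros Hcl Hn Happrox. apply Hcl; intros eps Heps.
  destruct (Happrox (eps / 2)) as [q [Hq [Hm Hk]]]; [lra|].
  exists q; split; [exact Hq|].
  rewrite pdist_frame by exact Hn.
  rewrite <- (sqrt_pow2 eps) by lra. apply sqrt_lt_1_alt.
  rewrite <- (pow2_abs (m - _)), <- (pow2_abs (k - _)), !(Rabs_minus_sym _ (dot _ q)).
  pose proof (Rabs_pos (dot n q - m)); pose proof (Rabs_pos (dot (perp n) q - k)).
  nra.
Qed.

Lemma inf_approx {T} (A : T -> Prop) (f : T -> R) m eta :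
  is_lub (fun y => forall x, A x -> y <= f x) m -> 0 < eta -> exists x, A x /\ f x < m + eta.
Proof.
  intros [Hub _] Heta. apply NNPP; intros Hnone.
  enough (m + eta <= m) by lra.
  apply Hub; intros x Hx. apply Rnot_lt_le; intros Hlt. apply Hnone; eauto.
Qed.

Lemma dot_min_attained S n : Defs.closed S -> Defs.bounded S -> (exists p, S p) -> unit_vec n ->
  exists p, S p /\ forall q, S q -> dot n p <= dot n q.
Proof.
  intros Hcl [M HM] [p0 Hp0] Hn.
  assert (Hbd : forall u q, unit_vec u -> S q -> - M <= dot u q <= M).
  { intros u q Hu Hq. apply Rabs_le_between, (Rle_trans _ _ _ (Rabs_dot_unit_le u q Hu)), HM, Hq. }
  set (f := dot n); set (g := dot (perp n)).
  destruct (completeness (fun y => forall q, S q -> y <= f q)) as [m Hm].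
  { exists (f p0). intros y Hy. apply Hy, Hp0. }
  { exists (- M). intros q Hq. apply Hbd; auto. }
  assert (Hm_le : forall q, S q -> m <= f q).
  { intros q Hq. apply Hm. intros y Hy. apply Hy, Hq. }
  (* [k] is the limit, as [d] tends to 0, of the infimum of [g] over the [d]-almost
     minimizers of [f]. *)
  destruct (completeness (fun y => exists d, 0 < d /\ forall q, S q -> f q <= m + d -> y <= g q))
    as [k Hk].
  { exists M. intros y [d [Hd Hy]]. destruct (inf_approx S f m d Hm Hd) as [q [Hq Hfq]].
    apply (Rle_trans _ (g q)); [apply Hy; auto; lra | apply Hbd; auto using unit_vec_perp]. }
  { exists (- M), 1. split; [lra|]. intros q Hq _. apply Hbd; auto using unit_vec_perp. }
  exists (padd (pscale m n) (pscale k (perp n))). split.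
  - apply closed_frame_point; auto. intros e He.
    destruct (lub_approx _ _ e Hk He) as [y [[d [Hd Hy]] Hky]].
    assert (Hq : exists q, S q /\ f q <= m + Rmin d (e / 2) /\ g q < k + e).
    { apply NNPP; intros Hnone.
      enough (k + e <= k) by lra.
      apply Hk. exists (Rmin d (e / 2)). split; [apply Rmin_glb_lt; lra|].
      intros q Hq Hfq. apply Rnot_lt_le; intros Hgq. apply Hnone; eauto. }
    destruct Hq as [q [Hq [Hfq Hgq]]].
    pose proof (Rmin_l d (e / 2)); pose proof (Rmin_r d (e / 2)); pose proof (Hm_le q Hq).
    assert (y <= g q) by (apply Hy; auto; lra).
    exists q. split; [exact Hq|]. split; apply Rabs_def1; unfold f, g in *; lra.
  - intros q Hq. replace (dot n _) with m by
      (unfold unit_vec, dot, padd, pscale, perp in *; simpl;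
       rewrite <- (Rmult_1_r m) at 1; rewrite <- Hn; ring).
    apply Hm_le, Hq.
Qed.

Lemma continuity_pt_lipschitz f K x :
  (forall y, Rabs (f y - f x) <= K * Rabs (y - x)) -> continuity_pt f x.
Proof.
  intros Hlip eps Heps.
  exists (eps / (Rabs K + 1)); split; [apply Rdiv_lt_0_compat; pose proof (Rabs_pos K); lra|].
  intros y [_ Hy]; simpl in *; unfold R_dist in *.
  apply (Rle_lt_trans _ _ _ (Hlip y)).
  pose proof (Rabs_pos K); pose proof (Rle_abs K); pose proof (Rabs_pos (y - x)).
  apply (Rle_lt_trans _ (Rabs K * Rabs (y - x))); [nra|].
  apply (Rle_lt_trans _ ((Rabs K + 1) * Rabs (y - x))); [nra|].
  rewrite Rmult_comm; apply (Rmult_lt_reg_r (/ (Rabs K + 1))); [apply Rinv_0_lt_compat; lra|].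
  rewrite Rmult_assoc, Rinv_r, Rmult_1_r by lra. exact Hy.
Qed.

Lemma derivable_pt_lim_shift (F : R -> R) b x l :
  derivable_pt_lim F (x + b) l -> derivable_pt_lim (fun y => F (y + b)) x l.
Proof.
  intros HF eps Heps. destruct (HF eps Heps) as [d Hd].
  exists d. intros h Hh0 Hh. replace (x + h + b) with (x + b + h) by ring. auto.
Qed.

Lemma antiderivative_periodic_increment (F f : R -> R) T :
  (forall x, derivable_pt_lim F x (f x)) -> (forall x, f (x + T) = f x) ->
  forall y z, F (y + T) - F y = F (z + T) - F z.
Proof.
  intros HF Hper.
  assert (Hflat : forall y z, y < z -> F (y + T) - F y = F (z + T) - F z).
  { intros y z Hyz. apply (eq_is_derive (fun x => F (x + T) - F x)); [|exact Hyz].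
    intros x _. apply is_derive_Reals.
    enough (Hd : derivable_pt_lim (fun y => F (y + T) - F y) x (f (x + T) - f x))
      by (rewrite Hper, Rminus_diag_eq in Hd; auto).
    apply (derivable_pt_lim_minus (fun y => F (y + T)) F);
      [apply derivable_pt_lim_shift|]; apply HF. }
  intros y z. destruct (Rtotal_order y z) as [Hlt | [-> | Hgt]]; auto.
  symmetry; auto.
Qed.

Lemma periodic_local_max f T : 0 < T -> (forall x, continuity_pt f x) ->
  (forall x, f (x + T) = f x) -> exists c, forall x, c - T <= x <= c + T -> f x <= f c.
Proof.
  intros HT Hf Hper.
  destruct (continuity_ab_maj f 0 T) as [c [Hmax Hc]]; [lra | auto |].
  exists c; intros x Hx.
  destruct (Rlt_le_dec x 0) as [Hneg | Hnonneg]; [rewrite <- Hper; apply Hmax; lra|].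
  destruct (Rle_lt_dec x T) as [HleT | HgtT]; [apply Hmax; lra|].
  replace x with ((x - T) + T) by ring. rewrite Hper. apply Hmax; lra.
Qed.

Lemma touching_max_derive_zero (f g : R -> R) a b c l :
  (forall x, f x <= g x) -> f c = g c -> (forall x, a < x < b -> g x <= g c) -> a < c < b ->
  derivable_pt_lim f c l -> l = 0.
Proof.
  intros Hfg Hc Hmax [Hac Hcb] Hl.
  rewrite <- (derive_pt_eq_0 f c l (exist _ l Hl) Hl).
  apply (deriv_maximum f a b c); auto.
  intros x Hax Hxb. rewrite Hc. apply (Rle_trans _ (g x)); auto.
Qed.

Lemma derivable_pt_lim_RInt (f : R -> R) y : (forall x, continuity_pt f x) ->
  derivable_pt_lim (fun z => RInt f 0 z) y (f y).
Proof.
  intros Hf. apply is_derive_Reals, (is_derive_RInt f _ 0).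
  - apply filter_forall; intros z. apply (@RInt_correct R_CompleteNormedModule), ex_RInt_continuous.
    intros x _. apply continuity_pt_filterlim, Hf.
  - apply continuity_pt_filterlim, Hf.
Qed.

Lemma derivable_pt_lim_dot_dir q y :
  derivable_pt_lim (fun t => dot (dir t) q) y (dot (perp (dir y)) q).
Proof. apply is_derive_Reals. unfold dot, perp, dir; simpl. auto_derive; auto. ring. Qed.

Lemma dot_dir_lipschitz q x y :
  Rabs (dot (dir y) q - dot (dir x) q) <= pdist q (0, 0) * Rabs (y - x).
Proof.
  apply (bounded_variation (fun t => dot (dir t) q) (fun t => dot (perp (dir t)) q)).
  intros t _. split.
  - apply is_derive_Reals, derivable_pt_lim_dot_dir.
  - apply Rabs_dot_unit_le, unit_vec_perp, unit_vec_dir.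
Qed.


Lemma eq_by_combination L R D z w : D = 0 -> z = 0 -> L - R = D + z * w -> L = R.
Proof. intros -> -> H. lra. Qed.

Section Support.

Variable S : pt -> Prop.
Hypotheses (S_closed : Defs.closed S) (S_bounded : Defs.bounded S) (S_nonempty : exists p, S p).

Definition contact (y : R) : pt :=
  proj1_sig (constructive_indefinite_description _
    (dot_min_attained S (dir y) S_closed S_bounded S_nonempty (unit_vec_dir y))).

Definition support (y : R) : R := dot (dir y) (contact y).

Lemma contact_spec y : S (contact y) /\ forall q, S q -> support y <= dot (dir y) q.
Proof. unfold support, contact. apply proj2_sig. Qed.

Lemma contact_in y : S (contact y).
Proof. apply contact_spec. Qed.

Lemma support_le y q : S q -> support y <= dot (dir y) q.
Proof. apply contact_spec. Qed.

Lemma support_periodic y : support (y + 2 * PI) = support y.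
Proof.
  apply Rle_antisym.
  - unfold support at 2. rewrite <- dir_add_2PI. apply support_le, contact_in.
  - unfold support at 2. rewrite dir_add_2PI. apply support_le, contact_in.
Qed.

Lemma support_continuous y : continuity_pt support y.
Proof.
  destruct S_bounded as [M HM].
  apply (continuity_pt_lipschitz _ M). intros x.
  assert (Hlip : forall p u v, S p -> dot (dir u) p - dot (dir v) p <= M * Rabs (u - v)).
  { intros p u v Hp.
    apply (Rle_trans _ _ _ (Rle_abs _)), (Rle_trans _ _ _ (dot_dir_lipschitz p v u)).
    apply Rmult_le_compat_r; [apply Rabs_pos | auto]. }
  apply Rabs_le; split.
  - pose proof (support_le y (contact x) (contact_in x)).
    pose proof (Hlip (contact x) y x (contact_in x)) as Hyx.
    rewrite Rabs_minus_sym in Hyx. change (support x) with (dot (dir x) (contact x)). lra.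
  - pose proof (support_le x (contact y) (contact_in y)).
    pose proof (Hlip (contact y) x y (contact_in y)).
    change (support y) with (dot (dir y) (contact y)). lra.
Qed.

Variable alpha : R.
Hypothesis alpha_range : 0 < alpha < PI.

Let beta := alpha - PI.

Definition support_integral (y : R) : R := RInt support 0 y.

Definition window_integral (y : R) : R := support_integral y - support_integral (y + beta).

Definition potential (y : R) : R :=
  (1 - cos alpha) * window_integral y - sin alpha * (support y + support (y + beta)).

Lemma support_integral_derive y : derivable_pt_lim support_integral y (support y).
Proof. apply derivable_pt_lim_RInt, support_continuous. Qed.

Lemma window_integral_derive y :
  derivable_pt_lim window_integral y (support y - support (y + beta)).
Proof.
  apply (derivable_pt_lim_minus support_integral (fun z => support_integral (z + beta))).
  - apply support_integral_derive.
  - apply derivable_pt_lim_shift, support_integral_derive.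
Qed.

Lemma window_integral_periodic y : window_integral (y + 2 * PI) = window_integral y.
Proof.
  pose proof (antiderivative_periodic_increment support_integral support (2 * PI)
    support_integral_derive support_periodic y (y + beta)) as Hinc.
  unfold window_integral. replace (y + 2 * PI + beta) with (y + beta + 2 * PI) by ring. lra.
Qed.

Lemma potential_continuous y : continuity_pt potential y.
Proof.
  apply continuity_pt_minus; apply continuity_pt_scal.
  - apply derivable_continuous_pt.
    exists (support y - support (y + beta)). apply window_integral_derive.
  - apply continuity_pt_plus; [apply support_continuous|].
    apply (continuity_pt_comp (fun z => z + beta) support); [|apply support_continuous].
    apply derivable_continuous_pt, derivable_pt_plus;
      [apply derivable_pt_id | apply derivable_pt_const].
Qed.

Lemma potential_periodic y : potential (y + 2 * PI) = potential y.
Proof.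
  unfold potential. rewrite window_integral_periodic, support_periodic.
  replace (y + 2 * PI + beta) with (y + beta + 2 * PI) by ring.
  rewrite support_periodic. reflexivity.
Qed.

Lemma contact_balance : exists c, forall p q, S p -> S q ->
  dot (dir c) p = support c -> dot (dir (c + beta)) q = support (c + beta) ->
  dot (dir (c + beta)) p - support (c + beta) = dot (dir c) q - support c.
Proof.
  destruct (periodic_local_max potential (2 * PI)) as [c Hmax];
    [pose proof PI_RGT_0; lra | apply potential_continuous | apply potential_periodic |].
  exists c; intros p q Hp Hq Hpc Hqc.
  (* [support] need not be differentiable: freezing the contact points [p], [q] gives a
     differentiable function touching [potential] from below at its maximum [c]. *)
  set (comparison := fun y =>
    (1 - cos alpha) * window_integral y - sin alpha * (dot (dir y) p + dot (dir (y + beta)) q)).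
  assert (Hsin : 0 <= sin alpha) by (apply sin_ge_0; lra).
  assert (Hderiv : derivable_pt_lim comparison c
    ((1 - cos alpha) * (support c - support (c + beta))
     - sin alpha * (dot (perp (dir c)) p + dot (perp (dir (c + beta))) q))).
  { apply (derivable_pt_lim_minus (fun y => (1 - cos alpha) * window_integral y)).
    - apply derivable_pt_lim_scal, window_integral_derive.
    - apply derivable_pt_lim_scal, (derivable_pt_lim_plus (fun y => dot (dir y) p)).
      + apply derivable_pt_lim_dot_dir.
      + apply (derivable_pt_lim_shift (fun y => dot (dir y) q)), derivable_pt_lim_dot_dir. }
  apply (touching_max_derive_zero comparison potential (c - 2 * PI) (c + 2 * PI)) in Hderiv.
  - rewrite <- Hpc, <- Hqc in *. unfold beta in *. revert Hderiv.
    unfold dot, perp. rewrite dir_add_sub_PI. unfold dir; simpl. intros Hderiv.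
    apply (eq_by_combination _ _ _ (sin alpha ^ 2 + cos alpha ^ 2 - 1)
             (cos c * fst q + sin c * snd q) Hderiv).
    + rewrite sin2_cos2_pow. ring.
    + ring.
  - intros y. unfold comparison, potential.
    pose proof (support_le y p Hp); pose proof (support_le (y + beta) q Hq). nra.
  - unfold comparison, potential. rewrite Hpc, Hqc. reflexivity.
  - intros x Hx. apply Hmax. lra.
  - pose proof PI_RGT_0. lra.
Qed.

End Support.

Section Wedge.

Variables (S : pt -> Prop) (c alpha h1 h2 : R) (X Y : pt).
Hypothesis alpha_range : 0 < alpha < PI.

(* [n1], [n2] are the inner normals of the two sides, [h1], [h2] the heights of their
   support lines, [apex] the intersection of these lines, and [coord_u p], [coord_v p] the
   coordinates of [p] in the oblique frame [(apex; u, v)] whose axes are the two sides.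
   Thus [balance] says that every contact point on the first side is as far from the apex
   as every contact point on the second. *)
Let n1 : pt := dir c.
Let n2 : pt := dir (c + (alpha - PI)).

Hypotheses
  (support1 : forall p, S p -> h1 <= dot n1 p)
  (support2 : forall p, S p -> h2 <= dot n2 p)
  (balance : forall p q, S p -> S q -> dot n1 p = h1 -> dot n2 q = h2 ->
     dot n2 p - h2 = dot n1 q - h1)
  (X_in : S X) (Y_in : S Y) (X_on : dot n1 X = h1) (Y_on : dot n2 Y = h2).

Let u : pt := (sin c, - cos c).
Let v : pt := perp n2.
Let apex : pt := padd (pscale h1 n1) (pscale (- (cos alpha * h1 + h2) / sin alpha) (perp n1)).
Let coord_u (p : pt) : R := (dot n2 p - h2) / sin alpha.
Let coord_v (p : pt) : R := (dot n1 p - h1) / sin alpha.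

Lemma sin_alpha_pos : 0 < sin alpha.
Proof. apply sin_gt_0; lra. Qed.

Lemma n2_eq :
  n2 = (- cos alpha * cos c + sin alpha * sin c, - cos alpha * sin c - sin alpha * cos c).
Proof. apply dir_add_sub_PI. Qed.

Ltac wedge_algebra :=
  unfold coord_u, coord_v, apex, u, v; rewrite ?n2_eq;
  unfold unit_vec, n1, dir, padd, pscale, perp, dot, Rdiv; simpl;
  pose proof (sin2_cos2_pow c); pose proof (sin2_cos2_pow alpha);
  assert (sin alpha * / sin alpha = 1) by (apply Rinv_r; pose proof sin_alpha_pos; lra);
  (* [nsatz] needs the inverse as a plain variable. *)
  set (i := / sin alpha) in *; clearbody i;
  apply Rminus_diag_uniq; ring_simplify; nsatz.

Lemma wedge_coords p : p = padd apex (padd (pscale (coord_u p) u) (pscale (coord_v p) v)).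
Proof.
  destruct p as [x y]. unfold padd at 1. f_equal; wedge_algebra.
Qed.

Lemma unit_u : unit_vec u.
Proof. wedge_algebra. Qed.
Lemma unit_v : unit_vec v.
Proof. wedge_algebra. Qed.
Lemma dot_u_v : dot u v = cos alpha.
Proof. wedge_algebra. Qed.
Lemma ray_u_on_line1 s : dot n1 (padd apex (pscale s u)) = h1.
Proof. wedge_algebra. Qed.
Lemma ray_v_on_line2 t : dot n2 (padd apex (pscale t v)) = h2.
Proof. wedge_algebra. Qed.

Lemma line1_ray p : dot n1 p = h1 -> p = padd apex (pscale (coord_u p) u).
Proof.
  intros Hp. rewrite (wedge_coords p) at 1.
  replace (coord_v p) with 0 by (unfold coord_v; rewrite Hp; unfold Rdiv; ring).
  unfold padd, pscale; simpl; f_equal; ring.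
Qed.

Lemma line2_ray p : dot n2 p = h2 -> p = padd apex (pscale (coord_v p) v).
Proof.
  intros Hp. rewrite (wedge_coords p) at 1.
  replace (coord_u p) with 0 by (unfold coord_u; rewrite Hp; unfold Rdiv; ring).
  unfold padd, pscale; simpl; f_equal; ring.
Qed.

Lemma coord_u_nonneg p : S p -> 0 <= coord_u p.
Proof.
  intros Hp. pose proof (support2 p Hp). pose proof sin_alpha_pos.
  apply Rmult_le_pos; [lra | left; apply Rinv_0_lt_compat; lra].
Qed.

Lemma coord_v_nonneg p : S p -> 0 <= coord_v p.
Proof.
  intros Hp. pose proof (support1 p Hp). pose proof sin_alpha_pos.
  apply Rmult_le_pos; [lra | left; apply Rinv_0_lt_compat; lra].
Qed.

Lemma line1_contact_unique p : S p -> dot n1 p = h1 -> p = X.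
Proof.
  intros Hp Hline. rewrite (line1_ray p Hline), (line1_ray X X_on). do 2 f_equal.
  unfold coord_u. f_equal.
  rewrite (balance p Y), (balance X Y); auto.
Qed.

Lemma line2_contact_unique q : S q -> dot n2 q = h2 -> q = Y.
Proof.
  intros Hq Hline. rewrite (line2_ray q Hline), (line2_ray Y Y_on). do 2 f_equal.
  unfold coord_v. f_equal.
  rewrite <- (balance X q), <- (balance X Y); auto.
Qed.

Lemma wedge_of_balanced_contacts : exists (P0 u v X Y : pt),
  unit_vec u /\ unit_vec v /\ dot u v = cos alpha /\
  (forall p, S p -> wedge P0 u v p) /\
  (forall p, (ray P0 u p /\ S p) <-> p = X) /\
  (forall p, (ray P0 v p /\ S p) <-> p = Y) /\
  pdist P0 X = pdist P0 Y.
Proof.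
  exists apex, u, v, X, Y.
  split; [exact unit_u|]. split; [exact unit_v|]. split; [exact dot_u_v|].
  split; [|split; [|split]].
  - intros p Hp. exists (coord_u p), (coord_v p).
    split; [apply coord_u_nonneg, Hp|]. split; [apply coord_v_nonneg, Hp | apply wedge_coords].
  - intros p; split.
    + intros [[s [_ ->]] Hp]. apply line1_contact_unique; [exact Hp | apply ray_u_on_line1].
    + intros ->. split; [|exact X_in].
      exists (coord_u X). split; [apply coord_u_nonneg, X_in | apply line1_ray, X_on].
  - intros p; split.
    + intros [[t [_ ->]] Hp]. apply line2_contact_unique; [exact Hp | apply ray_v_on_line2].
    + intros ->. split; [|exact Y_in].
      exists (coord_v Y). split; [apply coord_v_nonneg, Y_in | apply line2_ray, Y_on].
  - rewrite (line1_ray X X_on), (line2_ray Y Y_on).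
    rewrite !pdist_padd_pscale by auto using unit_u, unit_v, coord_u_nonneg, coord_v_nonneg.
    unfold coord_u, coord_v. f_equal. apply balance; auto.
Qed.

End Wedge.

Theorem lemma2 (S : pt -> Prop) (alpha : R) :
  (exists p, S p) -> compact2 S -> convex S ->
  0 < alpha < PI ->
  exists (P0 u v X Y : pt),
    unit_vec u /\ unit_vec v /\ dot u v = cos alpha /\
    (forall p, S p -> wedge P0 u v p) /\
    (forall p, (ray P0 u p /\ S p) <-> p = X) /\
    (forall p, (ray P0 v p /\ S p) <-> p = Y) /\
    pdist P0 X = pdist P0 Y.
Proof.
  intros Hne [Hcl Hbd] _ Halpha.
  destruct (contact_balance S Hcl Hbd Hne alpha Halpha) as [c Hbalance].
  apply (wedge_of_balanced_contacts S c alpha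
    (support S Hcl Hbd Hne c) (support S Hcl Hbd Hne (c + (alpha - PI)))
    (contact S Hcl Hbd Hne c) (contact S Hcl Hbd Hne (c + (alpha - PI))));
    [exact Halpha | intros p Hp; apply support_le, Hp | intros p Hp; apply support_le, Hp
    | exact Hbalance | apply contact_in | apply contact_in | reflexivity | reflexivity].
Qed.
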